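(* Let $\Gamma$ be a single-player extensive-form game without chance nodes, and let $z^*\in\arg\max_{z\in\mathcal Z}u_1(z)$. Then $$\mathrm{VoR}^{\mathrm{opt}}(\Gamma)\le\frac{\max_{z\in\mathcal Z}u_1(z)}{\max_{z\in\mathcal Z}\alpha(z)u_1(z)}\le\frac{1}{\alpha(z^* )}.$$
   Context: A single-player extensive-form game without chance nodes consists of a finite rooted tree (nodes $\mathcal H$, leaves $\mathcal Z$, actions $A_h$), all nonterminal nodes belonging to Player 1, a utility $u_1:\mathcal Z\to\mathbb R_{\ge0}$, and a partition $\mathcal I_1$ of nonterminal nodes into infosets with common action sets $A_I$. For a node $h$ with root-to-$h$ path $(h_0,\dots,h_{d-1})$, $\mathrm{obs}_1(h)=(I_k,a_k)_k$ lists infosets of and actions taken at the $h_k$. $\mathrm{pr}_1(\Gamma)$ has the same tree and utilities, with each infoset partitioned into classes of $h\sim h'\iff\mathrm{obs}_1(h)=\mathrm{obs}_1(h')$. Behavioral strategies assign distributions over $A_I$ to infosets; $u_1(\mathrm{opt}(\cdot))$ is the maximum expected utility; $\mathrm{VoR}^{\mathrm{opt}}(\Gamma)=u_1(\mathrm{opt}(\mathrm{pr}_1(\Gamma)))/u_1(\mathrm{opt}(\Gamma))$. For $z\in\mathcal Z$ with path infosets/actions $(I_k,a_k)$, and $I\in\mathcal I_1$, $a\in A_I$: $n_z(I)=|\{k:I_k=I\}|$, $n_z(a)=|\{k:I_k=I,a_k=a\}|$, $p_z(a)=n_z(a)/n_z(I)$, $\alpha(z)=\prod_{I:n_z(I)>1}\prod_{a\in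 A_I:n_z(a)>0}p_z(a)^{n_z(a)}$. *)

From HB Require Import structures.
From mathcomp Require Import all_boot all_order all_algebra.
From mathcomp Require Import boolp classical_sets reals.
Set Implicit Arguments. Unset Strict Implicit. Unset Printing Implicit Defensive.
Import Order.TTheory GRing.Theory Num.Theory.
Local Open Scope ring_scope.

(* A finite game tree of a single player, no chance nodes.  Nonterminal nodes
   carry an infoset label [x : L]; the node [Node x c] has the action
   [a] available iff [c a = Some child].
   Finiteness of the tree is automatic (inductive, finitely branching). *)
Inductive tree (R : Type) (L : Type) (A : finType) :=
| Leaf of R
| Node of L & (A -> option (tree R L A)).
Arguments Leaf {R L A}.
Arguments Node {R L A}.

Section Game.
Variables (R : realType) (A : finType).

Fixpoint nodeinfo (L : eqType) (t : tree R L A) : seq (L * {set A}) :=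
  match t with
  | Leaf _ => [::]
  | Node x c => (x, [set a | isSome (c a)]) ::
      flatten [seq match c a with Some t' => nodeinfo t' | None => [::] end
              | a <- enum A]
  end.

(* well-formedness: the partition of nonterminal nodes into infosets (nodes
   with equal label) has common, nonempty action sets A_I *)
Definition wf (L : eqType) (t : tree R L A) : Prop :=
  (forall x S S', (x, S) \in nodeinfo t -> (x, S') \in nodeinfo t -> S = S')
  /\ (forall p, p \in nodeinfo t -> p.2 != finset.set0).

(* leaves z, each with obs_1(z) (sequence of (infoset, action) on the
   root-to-z path) and its utility u_1(z) *)
Fixpoint leaves_from (L : eqType) (o : seq (L * A)) (t : tree R L A)
  : seq (seq (L * A) * R) :=
  match t with
  | Leaf u => [:: (o, u)]
  | Node x c =>
      flatten [seq match c a with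
                   | Some t' => leaves_from (rcons o (x, a)) t'
                   | None => [::] end | a <- enum A]
  end.

Definition leaves (L : eqType) (t : tree R L A) := leaves_from [::] t.

Definition behavioral (L : eqType) (t : tree R L A) (s : L -> A -> R) : Prop :=
  forall x S, (x, S) \in nodeinfo t ->
    [/\ forall a, 0 <= s x a, forall a, a \notin S -> s x a = 0
      & \sum_(a : A) s x a = 1].

Fixpoint eu (L : eqType) (s : L -> A -> R) (t : tree R L A) : R :=
  match t with
  | Leaf u => u
  | Node x c => \sum_(a : A) s x a *
                 match c a with Some t' => eu s t' | None => 0 end
  end.

Definition opt_value (L : eqType) (t : tree R L A) : R :=
  sup [set r : R | exists s, behavioral t s /\ r = eu s t].

(* pr_1(G): same tree, each infoset I refined by obs_1(h); new label (I, obs_1 h) *)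
Fixpoint relabel (L : eqType) (o : seq (L * A)) (t : tree R L A)
  : tree R (L * seq (L * A))%type A :=
  match t with
  | Leaf u => Leaf u
  | Node x c => Node (x, o)
      (fun a => match c a with
                | Some t' => Some (relabel (rcons o (x, a)) t')
                | None => None end)
  end.

Definition pr1 (L : eqType) (t : tree R L A) := relabel [::] t.

Definition VoR (L : eqType) (t : tree R L A) : R :=
  opt_value (pr1 t) / opt_value t.

Definition nI (I : finType) (o : seq (I * A)) (i : I) : nat :=
  count (fun p => p.1 == i) o.
Definition na (I : finType) (o : seq (I * A)) (i : I) (a : A) : nat :=
  count (pred1 (i, a)) o.
Definition alpha (I : finType) (o : seq (I * A)) : R :=
  \prod_(i : I | (1 < nI o i)%N)
    \prod_(a : A | (0 < na o i a)%N)
      ((na o i a)%:R / (nI o i)%:R) ^+ (na o i a).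

(* max_z u_1(z) and max_z alpha(z) u_1(z) (utilities are >= 0, leaves nonempty) *)
Definition max_u (I : finType) (t : tree R I A) : R :=
  \big[Num.max/0]_(z <- leaves t) z.2.
Definition max_alpha_u (I : finType) (t : tree R I A) : R :=
  \big[Num.max/0]_(z <- leaves t) (alpha z.1 * z.2).
End Game.

From mathcomp Require Import all_boot all_order all_algebra.
From mathcomp Require Import boolp classical_sets reals.
Import Order.TTheory GRing.Theory Num.Theory.
Local Open Scope ring_scope.
Set Implicit Arguments. Unset Strict Implicit. Unset Printing Implicit Defensive.

(* No strategy of pr_1(G) earns more than the best leaf utility.  Conversely,
   for a leaf z, the strategy of G that plays at each infoset I the empirical
   frequencies p_z(.) of the actions taken at I on the path to z (and some
   available action at infosets off that path) reaches z with probability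
   prod_k p_z(a_k) = alpha(z), infosets visited once contributing a factor 1.
   Hence u_1(opt(G)) >= max_z alpha(z) u_1(z), and the first inequality
   follows.  The second one is max_z alpha(z) u_1(z) >= alpha(z* ) u_1(z* ). *)

Section Trees.
Variables (R : realType) (A : finType) (L : eqType).
Implicit Types (t : tree R L A) (c : A -> option (tree R L A)) (x : L).
Implicit Types (o : seq (L * A)) (s : L -> A -> R) (z : seq (L * A) * R).

Lemma tree_child_ind (P : tree R L A -> Prop) :
  (forall u, P (Leaf u)) ->
  (forall x c, (forall a t', c a = Some t' -> P t') -> P (Node x c)) ->
  forall t, P t.
Proof.
move=> Pleaf Pnode; fix IH 1 => -[u|x c]; first exact: Pleaf.
apply: Pnode => a t'; case: (c a) => [t0 [<-]|]; [exact: IH | discriminate].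
Qed.

Lemma nodeinfo_child x c a t' :
  c a = Some t' -> {subset nodeinfo t' <= nodeinfo (Node x c)}.
Proof.
move=> ca p p_t'; rewrite inE; apply/orP; right; apply/flatten_mapP.
by exists a; rewrite ?mem_enum // ca.
Qed.

Lemma leaves_from_child o x c a t' :
  c a = Some t' ->
  {subset leaves_from (rcons o (x, a)) t' <= leaves_from o (Node x c)}.
Proof.
by move=> ca z z_t'; apply/flatten_mapP; exists a; rewrite ?mem_enum // ca.
Qed.

Lemma leaves_from_node_inv o x c z :
  z \in leaves_from o (Node x c) ->
  exists a t', c a = Some t' /\ z \in leaves_from (rcons o (x, a)) t'.
Proof.
by move=> /flatten_mapP [a _]; case ca: (c a) => [t'|] // z_t'; exists a, t'.
Qed.

Lemma behavioral_child s x c a t' :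
  behavioral (Node x c) s -> c a = Some t' -> behavioral t' s.
Proof. by move=> sb ca y S yS; apply: sb; apply: nodeinfo_child ca _ yS. Qed.

Lemma mem_path_nodeinfo t o z q :
  z \in leaves_from o t -> q \in z.1 ->
  q \in o \/ exists2 S, (q.1, S) \in nodeinfo t & q.2 \in S.
Proof.
elim/tree_child_ind: t o => [u|x c IH] o; first by rewrite inE => /eqP ->; left.
move=> /leaves_from_node_inv [a [t' [ca z_t']]] qz.
case: (IH a t' ca _ z_t' qz) => [|[S qS aS]]; last first.
  by right; exists S => //; apply: nodeinfo_child ca _ qS.
rewrite mem_rcons inE => /orP [/eqP ->|]; last by left.
by right; exists [set b | isSome (c b)]; rewrite ?inE ?eqxx ?ca.
Qed.

Lemma relabel_utilities t (ro : seq (L * seq (L * A) * A)) o o' :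
  [seq y.2 | y <- leaves_from ro (relabel o t)] =
  [seq z.2 | z <- leaves_from o' t].
Proof.
elim/tree_child_ind: t ro o o' => [//|x c IH] ro o o'.
rewrite /= !map_flatten -!map_comp; congr flatten; apply: eq_map => a /=.
by case ca: (c a) => [t'|] //; exact: IH ca _ _ _.
Qed.

Lemma eu_ge0 s t o :
  behavioral t s -> (forall z, z \in leaves_from o t -> 0 <= z.2) -> 0 <= eu s t.
Proof.
elim/tree_child_ind: t o => [u|x c IH] o sb u_ge0.
  by apply: (u_ge0 (o, u)); rewrite inE.
have [s_ge0 _ _] := sb x _ (mem_head _ _).
apply: sumr_ge0 => a _; apply: mulr_ge0; first exact: s_ge0.
case ca: (c a) => [t'|] //; apply: (IH _ _ ca (rcons o (x, a))).
  exact: behavioral_child sb ca.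
by move=> z z_t'; apply: u_ge0; apply: leaves_from_child ca _ z_t'.
Qed.

Lemma eu_le s t o M :
  behavioral t s -> (forall z, z \in leaves_from o t -> z.2 <= M) -> eu s t <= M.
Proof.
elim/tree_child_ind: t o => [u|x c IH] o sb u_le.
  by apply: (u_le (o, u)); rewrite inE.
have [s_ge0 s_off s_sum] := sb x _ (mem_head _ _).
apply: le_trans (_ : \sum_a s x a * M <= M); last first.
  by rewrite -mulr_suml s_sum mul1r.
apply: ler_sum => a _; case ca: (c a) => [t'|].
  apply: ler_wpM2l => //; apply: (IH _ _ ca (rcons o (x, a))).
    exact: behavioral_child sb ca.
  by move=> z z_t'; apply: u_le; apply: leaves_from_child ca _ z_t'.
by rewrite s_off ?mul0r // inE ca.
Qed.

(* The path to a leaf is followed with probability the product of the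
   probabilities of its actions; other leaves only add nonnegative terms. *)
Lemma eu_ge_path s t o z :
  behavioral t s -> (forall z, z \in leaves_from o t -> 0 <= z.2) ->
  z \in leaves_from o t ->
  exists2 p, z.1 = o ++ p & (\prod_(q <- p) s q.1 q.2) * z.2 <= eu s t.
Proof.
elim/tree_child_ind: t o => [u|x c IH] o sb u_ge0.
  by rewrite inE => /eqP -> /=; exists [::]; rewrite ?cats0 // big_nil mul1r.
move=> /leaves_from_node_inv [a [t' [ca z_t']]].
have [s_ge0 _ _] := sb x _ (mem_head _ _).
have u_ge0_child b t'' : c b = Some t'' ->
    forall z', z' \in leaves_from (rcons o (x, b)) t'' -> 0 <= z'.2.
  by move=> cb z' z'_t''; apply: u_ge0; apply: leaves_from_child cb _ z'_t''.
have [p zp path_le] :=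
  IH a t' ca _ (behavioral_child sb ca) (u_ge0_child _ _ ca) z_t'.
exists ((x, a) :: p); first by rewrite zp cat_rcons.
rewrite big_cons -mulrA /= (bigD1 a) //= ca.
apply: le_trans (ler_wpM2l (s_ge0 a) path_le) _; rewrite lerDl.
apply: sumr_ge0 => b _; apply: mulr_ge0; first exact: s_ge0.
case cb: (c b) => [t''|] //.
exact: eu_ge0 (behavioral_child sb cb) (u_ge0_child _ _ cb).
Qed.

Lemma opt_value_no_strategy t :
  ~ (exists s, behavioral t s) -> opt_value t = 0.
Proof.
move=> no_s; rewrite /opt_value -[RHS](sup0 R); congr sup.
by apply/seteqP; split=> // r [s [sb _]]; apply: no_s; exists s.
Qed.

Lemma opt_value_le t M :
  0 <= M -> (forall z, z \in leaves t -> z.2 <= M) -> opt_value t <= M.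
Proof.
move=> M_ge0 u_le; have [[s sb]|no_s] := pselect (exists s, behavioral t s).
  apply: ge_sup; first by exists (eu s t), s.
  by move=> _ [s' [s'b ->]]; apply: eu_le s'b u_le.
by rewrite opt_value_no_strategy.
Qed.

End Trees.

Lemma prod_seq_count (R : comPzSemiRingType) (T : finType) (F : T -> R)
    (o : seq T) :
  \prod_(q <- o) F q = \prod_(q : T) F q ^+ count_mem q o.
Proof.
elim: o => [|p o IH]; first by rewrite big_nil big1.
rewrite big_cons IH /=; under [in RHS]eq_bigr => q _ do rewrite exprD.
rewrite big_split /=; congr (_ * _).
rewrite (bigD1 p) //= eqxx expr1 big1 ?mulr1 // => q /negbTE.
by rewrite eq_sym => ->.
Qed.

Section FrequencyStrategy.
Variables (R : realType) (A I : finType).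
Implicit Types (t : tree R I A) (o : seq (I * A)) (x : I) (a : A).

Lemma sum_na o x : (\sum_a na o x a)%N = nI o x.
Proof.
elim: o => [|[y b] o IH]; first by rewrite big1.
rewrite /na /nI /= big_split /= -/(na o x) -/(nI o x) IH; congr addn.
rewrite (bigD1 b) //= big1 ?addn0 => [|a /negbTE ab].
  by rewrite xpair_eqE eqxx andbT eq_sym.
by rewrite xpair_eqE [b == a]eq_sym ab andbF.
Qed.

Lemma na_le_nI o x a : (na o x a <= nI o x)%N.
Proof. by apply: sub_count => p /eqP ->. Qed.

Lemma alpha_gt0 o : 0 < alpha R o.
Proof.
apply: prodr_gt0 => x _; apply: prodr_gt0 => a na_gt0; apply: exprn_gt0.
by apply: divr_gt0; rewrite ltr0n // (leq_trans na_gt0) ?na_le_nI.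
Qed.

Definition available_action t x : option A :=
  [pick a | [exists S : {set A}, ((x, S) \in nodeinfo t) && (a \in S)]].

Definition freq_strategy t o x a : R :=
  if (0 < nI o x)%N then (na o x a)%:R / (nI o x)%:R
  else if available_action t x is Some b then (a == b)%:R else 0.

Lemma freq_strategy_ge0 t o x a : 0 <= freq_strategy t o x a.
Proof.
rewrite /freq_strategy; case: ifP => _; first exact: divr_ge0.
by case: available_action.
Qed.

Lemma freq_strategy_behavioral t z :
  wf t -> z \in leaves t -> behavioral t (freq_strategy t z.1).
Proof.
move=> [wf_eq wf_nonempty] zt x S xS; split; first exact: freq_strategy_ge0.
- move=> a aS; rewrite /freq_strategy; case: ifP => _.
    have [->|] := posnP (na z.1 x a); first by rewrite mul0r.
    rewrite /na -has_count has_pred1.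
    case/(mem_path_nodeinfo zt) => [//|[S' xS' aS']].
    by rewrite (wf_eq _ _ _ xS xS') aS' in aS.
  rewrite /available_action; case: pickP => [b /existsP [S' /andP [xS' bS']]|//].
  by case: eqP => // ab; rewrite ab (wf_eq _ _ _ xS xS') bS' in aS.
- rewrite /freq_strategy; case nI_gt0: (0 < nI z.1 x)%N.
    by rewrite -mulr_suml -natr_sum sum_na divff // pnatr_eq0 -lt0n.
  rewrite /available_action; case: pickP => [b _|none].
    by rewrite (bigD1 b) //= eqxx big1 ?addr0 // => a /negbTE ->.
  have /set0Pn [a aS] := wf_nonempty _ xS.
  by have /existsP [] := negbT (none a); exists S; rewrite xS aS.
Qed.

(* Infosets visited once on the path contribute (1/1)^1, which alpha omits. *)
Lemma prod_freq_strategy t o :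
  \prod_(q <- o) freq_strategy t o q.1 q.2 = alpha R o.
Proof.
rewrite prod_seq_count.
rewrite (eq_bigr (fun q => freq_strategy t o q.1 q.2 ^+ na o q.1 q.2)); last by case.
rewrite -(pair_bigA _ (fun x a => freq_strategy t o x a ^+ na o x a)) /alpha.
rewrite [RHS]big_mkcond; apply: eq_bigr => x _.
have [nI0|nI_gt0] := posnP (nI o x).
  rewrite nI0 /=; apply: big1 => a _.
  by have := na_le_nI o x a; rewrite nI0 leqn0 => /eqP ->.
rewrite /freq_strategy nI_gt0; case: ifP => [nI_gt1|nI_le1].
  rewrite [RHS]big_mkcond; apply: eq_bigr => a _ /=.
  by case: posnP => [->|].
have nI1 : nI o x = 1%N by apply/eqP; rewrite eqn_leq nI_gt0 leqNgt nI_le1.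
apply: big1 => a _; have := na_le_nI o x a; rewrite nI1.
by case: (na o x a) => [|[|]] // _; rewrite divr1.
Qed.

Lemma alpha_mul_utility_le_eu t z :
  wf t -> (forall z, z \in leaves t -> 0 <= z.2) -> z \in leaves t ->
  alpha R z.1 * z.2 <= eu (freq_strategy t z.1) t.
Proof.
move=> wf_t u_ge0 zt.
have [p zp path_le] := eu_ge_path (freq_strategy_behavioral wf_t zt) u_ge0 zt.
by rewrite -(prod_freq_strategy t z.1) {1}zp.
Qed.

End FrequencyStrategy.

Section Values.
Variables (R : realType) (A I : finType).
Implicit Types (t : tree R I A) (z : seq (I * A) * R).

Lemma max_u_ge0 t : 0 <= max_u t.
Proof. exact: bigmax_ge_id. Qed.

Lemma leaf_le_max_u t z : z \in leaves t -> z.2 <= max_u t.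
Proof. by move=> zt; apply: (le_bigmax_seq _ z xpredT (fun z => z.2) zt). Qed.

Lemma eu_le_opt_value t s : behavioral t s -> eu s t <= opt_value t.
Proof.
move=> sb; apply: ub_le_sup; last by exists s.
by exists (max_u t) => _ [s' [s'b ->]]; apply: eu_le s'b (@leaf_le_max_u t).
Qed.

Lemma opt_value_ge0 t : (forall z, z \in leaves t -> 0 <= z.2) -> 0 <= opt_value t.
Proof.
move=> u_ge0; have [[s sb]|no_s] := pselect (exists s, behavioral t s).
  exact: le_trans (eu_ge0 sb u_ge0) (eu_le_opt_value sb).
by rewrite opt_value_no_strategy.
Qed.

Lemma max_alpha_u_le_opt_value t :
  wf t -> (forall z, z \in leaves t -> 0 <= z.2) -> max_alpha_u t <= opt_value t.
Proof.
move=> wf_t u_ge0; rewrite /max_alpha_u big_seq.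
apply: bigmax_le => [|z zt]; first exact: opt_value_ge0.
apply: le_trans (alpha_mul_utility_le_eu wf_t u_ge0 zt) _.
exact/eu_le_opt_value/freq_strategy_behavioral.
Qed.

Lemma opt_value_pr1_le_max_u t : opt_value (pr1 t) <= max_u t.
Proof.
apply: opt_value_le => [|z zt]; first exact: max_u_ge0.
have : z.2 \in [seq y.2 | y <- leaves (pr1 t)] by apply: map_f.
rewrite /leaves (relabel_utilities _ _ _ [::]) => /mapP [z' z't ->].
exact: leaf_le_max_u.
Qed.

End Values.

Lemma ratio_bounds (F : numFieldType) (a b m n c : F) :
  a <= m -> 0 <= m -> n <= b -> 0 < c -> c * m <= n ->
  a / b <= m / n /\ m / n <= 1 / c.
Proof.
move=> am m_ge0 nb c_gt0 cmn.
have n_ge0 : 0 <= n := le_trans (mulr_ge0 (ltW c_gt0) m_ge0) cmn.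
have [n0|n_neq0] := eqVneq n 0.
  have m_le0 : m <= 0 by rewrite -(pmulr_rle0 _ c_gt0) -n0.
  rewrite n0 invr0 mulr0 div1r invr_ge0; split; last exact: ltW.
  apply: mulr_le0_ge0; first exact: le_trans am m_le0.
  by rewrite invr_ge0 (le_trans n_ge0 nb).
have n_gt0 : 0 < n by rewrite lt_def n_neq0.
have b_gt0 : 0 < b := lt_le_trans n_gt0 nb.
split; last by rewrite ler_pdivrMr // div1r ler_pdivlMl.
apply: le_trans (ler_wpM2r _ am) _; first by rewrite invr_ge0 ltW.
by apply: ler_wpM2l => //; rewrite lef_pV2 ?posrE.
Qed.

Theorem proposition7 (R : realType) (I A : finType) (G : tree R I A)
    (zstar : seq (I * A) * R) :
  wf G ->
  (forall z, z \in leaves G -> 0 <= z.2) ->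
  zstar \in leaves G ->
  (forall z, z \in leaves G -> z.2 <= zstar.2) ->
  VoR G <= max_u G / max_alpha_u G /\
  max_u G / max_alpha_u G <= 1 / @alpha R A I zstar.1.
Proof.
move=> wf_G u_ge0 zstar_G zstar_max.
apply: ratio_bounds.
- exact: opt_value_pr1_le_max_u.
- exact: max_u_ge0.
- exact: max_alpha_u_le_opt_value.
- exact: alpha_gt0.
have max_u_zstar : max_u G <= zstar.2.
  by rewrite /max_u big_seq; apply: bigmax_le; [apply: u_ge0 | apply: zstar_max].
apply: le_trans (ler_wpM2l (ltW (alpha_gt0 _ _)) max_u_zstar) _.
exact: (le_bigmax_seq _ zstar xpredT (fun z => alpha R z.1 * z.2) zstar_G).
Qed.
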